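(* Let $H=\Bbbk^G{}^\tau\#_\sigma\Bbbk F$ be as in the context and fix $f\in F$. (1) The map $\Bbbk^{G_f}_{\tau_f}\to H'_f$, $p_g\mapsto p_g\#f$ ($g\in G_f$), is a coalgebra isomorphism onto the subcoalgebra $\mathrm{span}\{p_g\#f\mid g\in G_f\}$ of $H'_f$. (2) If $(V,\rho)$ is a right $\Bbbk^{G_f}_{\tau_f}$-comodule with $\rho(v)=\sum_{g\in G_f}v_g\otimes p_g$, then $V\otimes\Bbbk f$ is a right $H'_f$-comodule via $\rho'(v\otimes f)=\sum_{g\in G_f}v_g\otimes f\otimes p_g\#f$. (3) The cotensor product $\tilde V=(V\otimes\Bbbk f)\Box_{H'_f}H$ is a right $H$-comodule with coaction $\mathrm{id}\otimes\Delta$, and $\tilde V=\bigoplus_{z\in T_f}V\otimes\Bbbk f\otimes z$ as vector spaces, where for $v\in V$, $z\in T_f$ the symbol $v\otimes f\otimes z$ denotes the element $\sum_{g\in G_f}\tau(gz,z^{-1};f)\,v_g\otimes f\otimes p_{gz}\#(z^{-1}\triangleright f)\in\tilde V$ (the map $v\mapsto v\otimes f\otimes z$ being injective and linear). Writing each $x\in G$ uniquely as $x=g_xz_x$ with $g_x\in G_f$, $z_x\in T_f$, the coaction is $$\tilde\rho(v\otimes f\otimes z)=\sum_{x\in G}\tau(z_x^{-1},g_x^{-1};f)^{-1}\tau(z_x^{-1}g_x^{-1}z,z^{-1};f)\;v_{g_x^{-1}}\otimes f\otimes z_x\otimes p_{x^{-1}z}\#(z^{-1}\triangleright f)$$ for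 all $v\in V$, $z\in T_f$.
   Context: Standing setup: $\Bbbk$ is an algebraically closed field of characteristic $0$, $F$ a group (possibly infinite), $G$ a finite group, and $(F,G,\triangleleft,\triangleright)$ a matched pair: $\triangleright:G\times F\to F$ a left action of $G$ on the set $F$, $\triangleleft:G\times F\to G$ a right action of $F$ on the set $G$, with $g\triangleright(ff')=(g\triangleright f)((g\triangleleft f)\triangleright f')$ and $(gg')\triangleleft f=(g\triangleleft(g'\triangleright f))(g'\triangleleft f)$. Maps $\sigma:G\times F\times F\to\Bbbk^\times$, $(g,f,f')\mapsto\sigma(g;f,f')$, and $\tau:G\times G\times F\to\Bbbk^\times$, $(g,g',f)\mapsto\tau(g,g';f)$, satisfy: $\sigma(g;1_F,f)=\sigma(g;f,1_F)=\sigma(1_G;f,f')=1$; $\sigma(g\triangleleft f;f',f'')\sigma(g;f,f'f'')=\sigma(g;f,f')\sigma(g;ff',f'')$; $\tau(1_G,g;f)=\tau(g,1_G;f)=\tau(g,g';1_F)=1$; $\tau(g,g';g''\triangleright f)\tau(gg',g'';f)=\tau(g,g'g'';f)\tau(g',g'';f)$; and $\sigma(gg';f,f')\tau(g,g';ff')=\sigma(g;g'\triangleright f,(g'\triangleleft f)\triangleright f')\sigma(g';f,f')\tau(g,g';f)\tau(g\triangleleft(g'\triangleright f),g'\triangleleft f;f')$. $H$ has basis $\{p_g\#f\}$, product $(p_g\#f)(p_{g'}\#f')=\delta_{g\triangleleft f,g'}\sigma(g;f,f')p_g\#ff'$, coproduct $\Delta(p_g\#f)=\sum_{x\in G}\tau(gx^{-1},x;f)\,p_{gx^{-1}}\#(x\triangleright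 f)\otimes p_x\#f$, counit $\varepsilon(p_g\#f)=\delta_{g,1_G}$. Notation: $G_f=\{g\in G\mid g\triangleright f=f\}$; $T_f$ is a complete set of right coset representatives of $G_f$ in $G$ (so $G=\bigsqcup_{z\in T_f}G_fz$) with $1_G\in T_f$. $\Bbbk^{G_f}_{\tau_f}$ is the coalgebra with basis $\{p_g\}_{g\in G_f}$, $\Delta(p_g)=\sum_{x\in G_f}\tau(gx^{-1},x;f)p_{gx^{-1}}\otimes p_x$, $\varepsilon(p_g)=\delta_{g,1_G}$. $H'_f=\Bbbk^{G_f}{}^\tau\#\Bbbk F$ is the coalgebra with basis $\{p_g\#f'\mid g\in G_f,f'\in F\}$, $\Delta(p_g\#f')=\sum_{x\in G_f}\tau(gx^{-1},x;f')p_{gx^{-1}}\#(x\triangleright f')\otimes p_x\#f'$, $\varepsilon(p_g\#f')=\delta_{g,1_G}$; the projection $\pi_f:H\to H'_f$ keeping the terms with $g\in G_f$ is a coalgebra epimorphism, making $H$ a left $H'_f$-comodule via $(\pi_f\otimes\mathrm{id})\Delta$. For a right $C$-comodule $(M,\rho_M)$ and left $C$-comodule $(N,\rho_N)$, $M\Box_CN=\ker(\rho_M\otimes\mathrm{id}-\mathrm{id}\otimes\rho_N)\subseteq M\otimes N$. *)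

From HB Require Import structures.
From mathcomp Require Import all_boot all_algebra all_fingroup.

Set Implicit Arguments.
Unset Strict Implicit.
Unset Printing Implicit Defensive.

Import GRing.Theory.
Local Open Scope ring_scope.

(* - an element of H (basis p_g # f', g : G, f' : F) is its coefficient      *)
(*   function G -> F -> k ; an element of M (x) H (M a k-space) is its        *)
(*   coefficient function G -> F -> M (finitely supported); an element of     *)
(*   M (x) H (x) H is a coefficient function G -> F -> G -> F -> M.           *)
(* - the coefficient of p_h1#f1 (x) p_h2#f2 in Delta(p_g#f') =                *)
(*   sum_x tau(gx^-1,x;f') p_{gx^-1}#(x|>f') (x) p_x#f' is nonzero only for   *)
(*   g = h1 h2, f' = f2, f1 = h2 |> f2, which gives the coefficient formula   *)
(*   [DeltaH] below (checked against the basis formula in [DeltaH_basis]).    *)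

Section Setting.
Variables (k : fieldType) (F : groupType) (G : finGroupType).
Variables (lact : G -> F -> F) (ract : G -> F -> G).
Variables (sigma : G -> F -> F -> k) (tau : G -> G -> F -> k).

(* (F, G, <|, |>) is a matched pair: |> left action of G on the set F,     *)
(* <| right action of F on the set G, plus the two compatibilities.        *)
Definition matched_pair : Prop :=
  (forall x : F, lact 1%g x = x) /\
  (forall (g h : G) (x : F), lact (g * h)%g x = lact g (lact h x)) /\
  (forall g : G, ract g 1%g = g) /\
  (forall (g : G) (x y : F), ract g (x * y)%g = ract (ract g x) y) /\
  (forall (g : G) (x y : F),
      lact g (x * y)%g = (lact g x * lact (ract g x) y)%g) /\
  (forall (g h : G) (x : F),
      ract (g * h)%g x = (ract g (lact h x) * ract h x)%g).

Definition sigma_tau_conditions : Prop :=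
  (forall g x y, sigma g x y != 0) /\
  (forall g h x, tau g h x != 0) /\
  (forall g x, sigma g 1%g x = 1 /\ sigma g x 1%g = 1 /\
               (forall y, sigma 1%g x y = 1)) /\
  (forall g x y z, sigma (ract g x) y z * sigma g x (y * z)%g
                   = sigma g x y * sigma g (x * y)%g z) /\
  (forall g h x, tau 1%g g x = 1 /\ tau g 1%g x = 1 /\ tau g h 1%g = 1) /\
  (forall g h l x, tau g h (lact l x) * tau (g * h)%g l x
                   = tau g (h * l)%g x * tau h l x) /\
  (forall g h x y,
          sigma (g * h)%g x y * tau g h (x * y)%g
          = sigma g (lact h x) (lact (ract h x) y) * sigma h x y * tau g h x
            * tau (ract g (lact h x)) (ract h x) y).

Definition stab (f : F) : {set G} := [set g | lact g f == f].

Definition right_transversal (f : F) (T : {set G}) : Prop :=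
  is_transversal T (rcosets (stab f) [set: G]) [set: G] /\ 1%g \in T.

Definition zpart (f : F) (T : {set G}) (x : G) : G :=
  odflt 1%g [pick z in T | (x * z^-1)%g \in stab f].
Definition gpart (f : F) (T : {set G}) (x : G) : G :=
  (x * (zpart f T x)^-1)%g.

(* DeltaC f g a b = coefficient of p_a (x) p_b in Delta(p_g).                *)
Definition DeltaC (f : F) (g a b : G) : k :=
  \sum_(x in stab f) tau (g * x^-1)%g x f
                     * ((a == (g * x^-1)%g)%:R * (b == x)%:R).
Definition epsC (g : G) : k := (g == 1%g)%:R.

Section Modules.
Variable M : lmodType k.

(* Right k^{G_f}_{tau_f}-comodule (V, rho), rho(v) = sum_{g in G_f} v_g (x) p_g, *)
(* encoded by the coordinate maps vc g : v |-> v_g (g \in G_f).             *)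
Definition is_right_comod_C (f : F) (vc : G -> M -> M) : Prop :=
  [/\ (forall g a v w, g \in stab f -> vc g (a *: v + w) = a *: vc g v + vc g w),
      (* (rho (x) id) rho = (id (x) Delta) rho *)
      (forall v a b, a \in stab f -> b \in stab f ->
          vc a (vc b v) = \sum_(y in stab f) DeltaC f y a b *: vc y v) &
      (* (id (x) eps) rho = id *)
      (forall v, \sum_(g in stab f) epsC g *: vc g v = v)].

Definition finsupp (X : G -> F -> M) : Prop :=
  exists s : seq F, forall g x, x \notin s -> X g x = 0.

Definition basisH (g : G) (x : F) : G -> F -> k :=
  fun h y => ((h == g) && (y == x))%:R.

Definition DeltaH (X : G -> F -> M) : G -> F -> G -> F -> M :=
  fun h1 f1 h2 f2 =>
    if f1 == lact h2 f2 then tau h1 h2 f2 *: X (h1 * h2)%g f2 else 0.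

Definition epsH (g : G) (x : F) : k := (g == 1%g)%:R.

(* (id (x) eps)(Y) = m, for Y a finitely supported element of M (x) H *)
Definition counit_is (Y : G -> F -> M) (m : M) : Prop :=
  exists s : seq F, [/\ uniq s, (forall g x, x \notin s -> Y g x = 0) &
    \sum_(x <- s) \sum_(g : G) epsH g x *: Y g x = m].

Definition in_Hp (f : F) (X : G -> F -> M) : Prop :=
  finsupp X /\ forall g x, g \notin stab f -> X g x = 0.

(* comultiplication of H'_f: Delta(p_g#x) = sum_{y in G_f} tau(gy^-1,y;x)  *)
(*   p_{gy^-1}#(y|>x) (x) p_y#x, in coefficient form                         *)
Definition DeltaHp (f : F) (X : G -> F -> M) : G -> F -> G -> F -> M :=
  fun h1 f1 h2 f2 =>
    if (h1 \in stab f) && (h2 \in stab f) then DeltaH X h1 f1 h2 f2 else 0.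

(* (pi_f (x) id) applied to an element of M (x) H (x) H *)
Definition proj1f (f : F) (Y : G -> F -> G -> F -> M) : G -> F -> G -> F -> M :=
  fun h1 f1 h2 f2 => if h1 \in stab f then Y h1 f1 h2 f2 else 0.

Definition is_right_comod_Hp (f : F) (rho : M -> G -> F -> M) : Prop :=
  [/\ (forall a m m' g x, rho (a *: m + m') g x = a *: rho m g x + rho m' g x),
      (forall m, in_Hp f (rho m)),
      (forall m h1 f1 h2 f2,
          rho (rho m h2 f2) h1 f1 = DeltaHp f (rho m) h1 f1 h2 f2) &
      (forall m, counit_is (rho m) m)].

(* M (x) H as a left H'_f-comodule via (pi_f (x) id) Delta; the cotensor  *)
(* product M box_{H'_f} H = ker(rho (x) id - id (x) (pi_f (x) id)Delta),   *)
(* as a predicate on (finitely supported) elements of M (x) H.             *)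
Definition cotensorH (f : F) (rho : M -> G -> F -> M) (X : G -> F -> M) : Prop :=
  finsupp X /\
  forall h1 f1 h2 f2, rho (X h2 f2) h1 f1 = proj1f f (DeltaH X) h1 f1 h2 f2.

(* Elements of W (x) H are coefficient functions G -> F -> (G -> F -> M)    *)
(* with all coefficients in W.                                             *)
Definition is_right_comod_H_sub (W : (G -> F -> M) -> Prop)
  (rho : (G -> F -> M) -> G -> F -> G -> F -> M) : Prop :=
  [/\
      (W (fun _ _ => 0) /\
       forall a X Y, W X -> W Y -> W (fun g x => a *: X g x + Y g x)),
      (forall a X Y h1 f1 h2 f2, W X -> W Y ->
         rho (fun g x => a *: X g x + Y g x) h1 f1 h2 f2
         = a *: rho X h1 f1 h2 f2 + rho Y h1 f1 h2 f2),
      (forall X, W X ->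
         (exists s : seq F, forall h1 f1 h2 f2, f2 \notin s ->
              rho X h1 f1 h2 f2 = 0) /\
         (forall h2 f2, W (fun h1 f1 => rho X h1 f1 h2 f2))),
      (* (rho (x) id) rho = (id (x) Delta) rho *)
      (forall X, W X -> forall a1 b1 a2 b2 a3 b3,
         rho (fun h x => rho X h x a3 b3) a1 b1 a2 b2
         = DeltaH (fun h x => rho X a1 b1 h x) a2 b2 a3 b3) &
      (* (id (x) eps) rho = id *)
      (forall X, W X -> exists s : seq F,
         [/\ uniq s, (forall h1 f1 g x, x \notin s -> rho X h1 f1 g x = 0) &
          forall h1 f1, \sum_(x <- s) \sum_(g : G) epsH g x *: rho X h1 f1 g x
                        = X h1 f1])].

End Modules.

Lemma DeltaH_basis (g : G) (x : F) h1 f1 h2 f2 :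
  DeltaH (M := k^o) (basisH g x) h1 f1 h2 f2 =
  \sum_(y : G) tau (g * y^-1)%g y x
     * (basisH (g * y^-1)%g (lact y x) h1 f1 * basisH y x h2 f2).
Proof.
rewrite (bigD1 h2) //= big1 ?addr0 => [|y ne]; last first.
  by rewrite /basisH [h2 == y]eq_sym (negbTE ne) /= !mulr0.
rewrite /DeltaH /basisH eqxx /=.
have Z : (false%:R : k) = 0 by [].
have O : (true%:R : k) = 1 by [].
have [->|nx] := eqVneq f2 x; last first.
  by rewrite !andbF Z !mulr0; case: ifP => _ //; rewrite scaler0.
rewrite !andbT O mulr1.
have E : (h1 * h2 == g)%g = (h1 == g * h2^-1)%g.
  by apply/eqP/eqP => [<-|->]; rewrite ?mulgK ?mulgKV.
rewrite E; have [->|_] := eqVneq h1 (g * h2^-1)%g.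
  case: (f1 == lact h2 x); rewrite /= ?O ?Z ?mulr1 ?mulr0 //.
  exact: mulr1.
by rewrite /= Z mulr0; case: ifP => _ //; rewrite scaler0.
Qed.


(* the map k^{G_f}_{tau_f} -> H'_f, p_g |-> p_g # f, on coefficients        *)
Definition phi (f : F) (c : G -> k) : G -> F -> k :=
  fun h x => if (h \in stab f) && (x == f) then c h else 0.
(* phi (x) phi on coefficient functions of C (x) C *)
Definition phi2 (f : F) (D : G -> G -> k) : G -> F -> G -> F -> k :=
  fun h1 f1 h2 f2 =>
    if [&& h1 \in stab f, h2 \in stab f, f1 == f & f2 == f] then D h1 h2 else 0.
Definition basisC (g : G) : G -> k := fun h => (h == g)%:R.
Definition in_Sf (f : F) (X : G -> F -> k) : Prop :=
  forall h x, ~~ ((h \in stab f) && (x == f)) -> X h x = 0.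

Section Vdata.
Variables (V : lmodType k) (f : F) (vc : G -> V -> V).

(* rho'(v (x) f) = sum_{g in G_f} v_g (x) f (x) p_g # f ; V (x) kf == V *)
Definition rhoVf (v : V) : G -> F -> V :=
  fun h x => \sum_(g in stab f) (if (h == g) && (x == f) then vc g v else 0).

Definition Vtilde : (G -> F -> V) -> Prop := cotensorH f rhoVf.

Definition embz (z : G) (v : V) : G -> F -> V :=
  fun h x => \sum_(g in stab f) tau (g * z)%g z^-1%g f *:
     (if (h == (g * z)%g) && (x == lact z^-1%g f) then vc g v else 0).
End Vdata.

End Setting.

From HB Require Import structures.
From mathcomp Require Import all_boot all_algebra all_fingroup.
From mathcomp Require Import ring.

Set Implicit Arguments.
Unset Strict Implicit.
Unset Printing Implicit Defensive.

Import GRing.Theory.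
Local Open Scope ring_scope.

(* Since G_f fixes f, the comultiplication of H'_f sends p_g # f (g in G_f) to
   sum tau(a, b; f) p_a # f (x) p_b # f over a b = g in G_f, which is the
   comultiplication of k^{G_f}_{tau_f}; this gives (1) and, tensoring with V, (2).
   For (3), the components (1, f) and (g, f), g in G_f, of the cotensor identity
   characterise V~: an element X of V (x) H lies in V~ iff it is supported on the
   pairs (h, h^-1 |> f) and g acts on the value X(h, h^-1 |> f) by moving it to
   X(g h, h^-1 |> f) up to tau(g, h; h^-1 |> f). So X is determined by its values
   at the representatives z in T, which gives the decomposition with
   v_z = tau(z, z^-1; f)^-1 X(z, z^-1 |> f). The coaction formula then comes from
   two instances of the 2-cocycle identity of tau, comparing the factorisations
   (h1 h2) z^-1 and (h1 z_x^-1) g_x^-1 of one element, where x^-1 = h2 z^-1. *)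

Lemma big_if_eq (I : finType) (V : nmodType) (P : pred I) (i0 : I) (E : I -> V) :
  \sum_(i | P i) (if i == i0 then E i else 0) = if P i0 then E i0 else 0.
Proof.
rewrite -big_mkcondr; case: ifP => Pi0.
  by apply: big_pred1 => i /=; case: eqP => [->|]; rewrite ?Pi0 ?andbF.
by apply: big_pred0 => i /=; case: eqP => [->|]; rewrite ?Pi0 ?andbF.
Qed.

Lemma big_seq_if_eq (I : eqType) (V : nmodType) (s : seq I) (i0 : I) (E : I -> V) :
  uniq s -> \sum_(i <- s) (if i0 == i then E i else 0) = if i0 \in s then E i0 else 0.
Proof.
elim: s => [|i s IHs] /=; rewrite ?big_nil ?big_cons // => /andP[s'i /IHs->].
rewrite inE; case: eqP => [->|_] /=; last by rewrite add0r.
by rewrite (negbTE s'i) addr0.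
Qed.

Section SmashCoalgebra.
Variables (k : fieldType) (F : groupType) (G : finGroupType).
Variables (lact : G -> F -> F) (ract : G -> F -> G).
Variables (sigma : G -> F -> F -> k) (tau : G -> G -> F -> k).
Hypothesis hmp : matched_pair lact ract.
Hypothesis hst : sigma_tau_conditions lact ract sigma tau.

(** * The stabiliser G_f *)

Lemma lact1 x : lact 1%g x = x.
Proof. by case: hmp. Qed.

Lemma lactM g h x : lact (g * h)%g x = lact g (lact h x).
Proof. by case: hmp => _ []. Qed.

Lemma lact_eq_lactV h x y : (lact h x == y) = (x == lact h^-1%g y).
Proof. by apply/eqP/eqP => [<-|->]; rewrite -lactM ?mulVg ?mulgV lact1. Qed.

Lemma stab_group_set f : group_set (stab lact f).
Proof.
apply/group_setP; split=> [|g h]; rewrite !inE ?lact1 // lactM.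
by move=> /eqP gf /eqP->; rewrite gf.
Qed.

Canonical stab_group f := Group (stab_group_set f).

(** * The cocycle tau and the comultiplication of H *)

Lemma tau_neq0 g h x : tau g h x != 0.
Proof. by case: hst => _ []. Qed.

Lemma tau1g g x : tau 1%g g x = 1.
Proof. by case: hst => _ [_ [_ [_ [+ _]]]] => /(_ g g x)[]. Qed.

Lemma taug1 g x : tau g 1%g x = 1.
Proof. by case: hst => _ [_ [_ [_ [+ _]]]] => /(_ g g x)[_ []]. Qed.

Lemma tau_cocycle g h l x :
  tau g h (lact l x) * tau (g * h)%g l x = tau g (h * l)%g x * tau h l x.
Proof. by case: hst => _ [_ [_ [_ [_ []]]]]. Qed.

Lemma tau_cocycleV g z x :
  tau g z (lact z^-1%g x) * tau (g * z)%g z^-1%g x = tau z z^-1%g x.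
Proof. by rewrite tau_cocycle mulgV taug1 mul1r. Qed.

Lemma sum_epsH (M : lmodType k) (x : F) (Y : G -> M) :
  \sum_(g : G) epsH k g x *: Y g = Y 1%g.
Proof.
rewrite (bigD1 1%g) //= /epsH eqxx scale1r big1 ?addr0 // => g /negbTE->.
by rewrite scale0r.
Qed.

Section DeltaH.
Variable M : lmodType k.
Implicit Types X Y : G -> F -> M.

Lemma DeltaH_linear a X Y h1 f1 h2 f2 :
  DeltaH lact tau (fun g x => a *: X g x + Y g x) h1 f1 h2 f2
  = a *: DeltaH lact tau X h1 f1 h2 f2 + DeltaH lact tau Y h1 f1 h2 f2.
Proof.
rewrite /DeltaH; case: ifP => _; last by rewrite scaler0 addr0.
by rewrite scalerDr !scalerA mulrC.
Qed.

Lemma DeltaH_eq0 X h1 f1 h2 f2 :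
  (forall g, X g f2 = 0) -> DeltaH lact tau X h1 f1 h2 f2 = 0.
Proof. by move=> X0; rewrite /DeltaH X0 scaler0; case: ifP. Qed.

Lemma DeltaH_coassoc X a1 b1 a2 b2 a3 b3 :
  DeltaH lact tau (fun h x => DeltaH lact tau X h x a3 b3) a1 b1 a2 b2
  = DeltaH lact tau (fun h x => DeltaH lact tau X a1 b1 h x) a2 b2 a3 b3.
Proof.
rewrite /DeltaH; have [->|b2'] := eqVneq b2 (lact a3 b3); last first.
  by case: ifP => _; rewrite ?scaler0 //; case: ifP => _; rewrite ?scaler0.
rewrite -lactM; case: ifP => _; last by rewrite scaler0.
by rewrite !scalerA mulgA tau_cocycle mulrC.
Qed.

Lemma DeltaH_finsupp X : finsupp X ->
  exists s : seq F, forall h1 f1 h2 f2, f2 \notin s -> DeltaH lact tau X h1 f1 h2 f2 = 0.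
Proof. by case=> s X0; exists s => h1 f1 h2 f2 s'f2; apply: DeltaH_eq0 => g; apply: X0. Qed.

Lemma DeltaH_counit X : finsupp X -> exists s : seq F,
  [/\ uniq s, (forall h1 f1 g x, x \notin s -> DeltaH lact tau X h1 f1 g x = 0) &
   forall h1 f1, \sum_(x <- s) \sum_(g : G) epsH k g x *: DeltaH lact tau X h1 f1 g x
                 = X h1 f1].
Proof.
case=> s X0; exists (undup s); split=> [||h1 f1]; first exact: undup_uniq.
  by move=> h1 f1 g x; rewrite mem_undup => s'x; apply: DeltaH_eq0 => h; apply: X0.
under eq_bigr => x _ do rewrite sum_epsH /DeltaH lact1 mulg1 taug1 scale1r.
by rewrite big_seq_if_eq ?undup_uniq // mem_undup; case: ifP => // /negbT/X0->.
Qed.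

End DeltaH.

(** * Right cosets of the stabiliser *)

Variable f : F.
Local Notation S := (stab lact f).

Lemma stab_lact g : g \in S -> lact g f = f.
Proof. by rewrite inE => /eqP. Qed.

Lemma lactV_stabM g h : g \in S -> lact (g * h)^-1%g f = lact h^-1%g f.
Proof. by move=> Sg; rewrite invMg lactM stab_lact ?groupV. Qed.

Section Transversal.
Variable T : {set G}.
Hypothesis hT : right_transversal lact f T.

Lemma transversal_rcoset x :
  exists2 z0, z0 \in T & forall z, z \in T -> ((x * z^-1)%g \in S) = (z == z0).
Proof.
case: hT => /and3P[_ _ /forall_inP cardT1] _.
have /cards1P[z0 Ez0] : #|T :&: (S :* x)%g| == 1%N.
  by apply: cardT1; rewrite mem_rcosets mulSGid ?subsetT ?inE.
have memT z : z \in T -> ((x * z^-1)%g \in S) = (z == z0).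
  by move=> Tz; rewrite -in_set1 -Ez0 in_setI Tz mem_rcoset -groupV invMg invgK.
by exists z0 => //; have /setIP[] : z0 \in T :&: (S :* x)%g by rewrite Ez0 set11.
Qed.

Lemma zpartP x : zpart lact f T x \in T /\ gpart lact f T x \in S.
Proof.
rewrite /gpart /zpart; case: pickP => [z /andP[Tz Sz] | noz] //=.
have [z0 Tz0 Ez0] := transversal_rcoset x.
by have := noz z0; rewrite Tz0 Ez0 ?eqxx.
Qed.

Lemma zpart_eq x z : z \in T -> (x * z^-1)%g \in S -> zpart lact f T x = z.
Proof.
move=> Tz Sz; have [Tzx Sgx] := zpartP x; have [z0 _ Ez0] := transversal_rcoset x.
by move: Sgx Sz; rewrite /gpart (Ez0 _ Tzx) Ez0 // => /eqP-> /eqP->.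
Qed.

End Transversal.

(** * The subcoalgebra span {p_g # f | g in G_f} of H'_f *)

Lemma DeltaCE g a b :
  b \in S -> DeltaC lact tau f g a b = if g == (a * b)%g then tau a b f else 0.
Proof.
move=> Sb; rewrite /DeltaC (bigD1 b) //= big1 ?addr0 => [|x /andP[_ x'b]]; last first.
  by rewrite [b == x]eq_sym (negbTE x'b) !mulr0.
have -> : (a == g * b^-1)%g = (g == a * b)%g.
  by apply/eqP/eqP => ->; rewrite ?mulgKV ?mulgK.
by case: eqP => [->|]; rewrite ?mulgK eqxx ?mulr1 ?mulr0.
Qed.

Lemma DeltaHp_in_Sf (X : G -> F -> k^o) : in_Sf lact f X ->
  forall h1 f1 h2 f2, ~~ [&& h1 \in S, f1 == f, h2 \in S & f2 == f] ->
  DeltaHp lact tau f X h1 f1 h2 f2 = 0.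
Proof.
move=> SX h1 f1 h2 f2; rewrite /DeltaHp /DeltaH.
case: (boolP (h1 \in S)) => //= Sh1; case: (boolP (h2 \in S)) => //= Sh2.
have [->|f2'f] := eqVneq f2 f; first by rewrite stab_lact // andbT => /negbTE->.
by rewrite SX ?scaler0 ?if_same // (negbTE f2'f) andbF.
Qed.

Lemma DeltaHp_phi_basisC g : g \in S -> forall h1 f1 h2 f2,
  DeltaHp lact tau (M := k^o) f (phi lact f (basisC k g)) h1 f1 h2 f2
  = phi2 lact f (DeltaC lact tau f g) h1 f1 h2 f2.
Proof.
move=> Sg h1 f1 h2 f2; rewrite /DeltaHp /DeltaH /phi /phi2 /basisC.
case: (boolP (h1 \in S)) => //= Sh1; case: (boolP (h2 \in S)) => //= Sh2.
rewrite groupM // DeltaCE //; have [->|f2'f] := eqVneq f2 f; last first.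
  by rewrite !andbF; case: ifP => _; rewrite ?scaler0.
rewrite stab_lact // andbT; case: (f1 == f) => //.
by rewrite [g == _]eq_sym; case: eqP => _; [exact: mulr1 | exact: scaler0].
Qed.

Lemma counit_phi_basisC g : counit_is (M := k^o) (phi lact f (basisC k g)) (epsC k g).
Proof.
exists [:: f]; split=> // [h x|].
  by rewrite inE /phi => /negbTE->; rewrite andbF.
by rewrite big_seq1 sum_epsH /phi group1 eqxx /basisC /epsC eq_sym.
Qed.

Lemma phi_linear (a : k) (c c' : G -> k) h x :
  phi lact f (fun g => a * c g + c' g) h x = a * phi lact f c h x + phi lact f c' h x.
Proof. by rewrite /phi; case: ifP => _; rewrite ?mulr0 ?addr0. Qed.

Lemma phi_inj (c c' : G -> k) : (forall h x, phi lact f c h x = phi lact f c' h x) ->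
  forall g, g \in S -> c g = c' g.
Proof. by move=> Ecc' g Sg; have := Ecc' g f; rewrite /phi Sg eqxx. Qed.

Lemma in_Sf_phi (X : G -> F -> k) :
  in_Sf lact f X <-> exists c : G -> k, forall h x, X h x = phi lact f c h x.
Proof.
split=> [SX | [c Xc] h x /negbTE S'hx]; last by rewrite Xc /phi S'hx.
exists (fun h => X h f) => h x; rewrite /phi.
by case: ifP => [/andP[_ /eqP->] // | /negbT/SX].
Qed.

(** * The comodules V (x) kf and V~ *)

Section Comodule.
Variables (V : lmodType k) (vc : G -> V -> V).
Hypothesis hc : is_right_comod_C lact tau f vc.

Lemma vcZD g a v w : g \in S -> vc g (a *: v + w) = a *: vc g v + vc g w.
Proof. by case: hc => + _ _; apply. Qed.

Lemma vcD g v w : g \in S -> vc g (v + w) = vc g v + vc g w.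
Proof. by move=> Sg; have := vcZD 1 v w Sg; rewrite !scale1r. Qed.

Lemma vc0 g : g \in S -> vc g 0 = 0.
Proof. by move=> Sg; apply/(addrI (vc g 0)); rewrite -vcD // !addr0. Qed.

Lemma vcZ g a v : g \in S -> vc g (a *: v) = a *: vc g v.
Proof. by move=> Sg; have := vcZD a v 0 Sg; rewrite !addr0 vc0 // addr0. Qed.

Lemma vcM a b v : a \in S -> b \in S -> vc a (vc b v) = tau a b f *: vc (a * b)%g v.
Proof.
case: hc => _ coassoc _ Sa Sb; rewrite coassoc //.
under eq_bigr => g _ do rewrite DeltaCE // (fun_if (fun c => c *: vc g v)) scale0r.
by rewrite big_if_eq groupM.
Qed.

Lemma vc1 v : vc 1%g v = v.
Proof.
case: hc => _ _ counit; rewrite -{2}(counit v) (bigD1 1%g) //= big1 /epsC ?eqxx.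
  by rewrite scale1r addr0.
by move=> g /andP[_ /negbTE->]; rewrite scale0r.
Qed.

Lemma rhoVfE v h x :
  rhoVf lact f vc v h x = if (h \in S) && (x == f) then vc h v else 0.
Proof.
rewrite /rhoVf (eq_bigr (fun g => if g == h then if x == f then vc g v else 0 else 0)).
  by rewrite big_if_eq; case: (h \in S).
by move=> g _; rewrite [h == g]eq_sym; case: (g == h).
Qed.

Lemma rhoVfZD a m m' g x :
  rhoVf lact f vc (a *: m + m') g x = a *: rhoVf lact f vc m g x + rhoVf lact f vc m' g x.
Proof.
rewrite !rhoVfE; case: ifP => [/andP[Sg _]|_]; first exact: vcZD.
by rewrite scaler0 addr0.
Qed.

Lemma rhoVf_comodule : is_right_comod_Hp lact tau f (rhoVf lact f vc).
Proof.
split=> [|m|m h1 f1 h2 f2|m]; first exact: rhoVfZD.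
- split=> [|g x]; last by rewrite rhoVfE => /negbTE->.
  by exists [:: f] => g x; rewrite inE rhoVfE => /negbTE->; rewrite andbF.
- rewrite /DeltaHp /DeltaH !rhoVfE.
  case: (boolP (h1 \in S)) => Sh1 /=; last by case: (f1 == f).
  case: (boolP (h2 \in S)) => Sh2 /=; last by case: (f1 == f); rewrite ?vc0.
  rewrite groupM //=; have [->|f2'f] := eqVneq f2 f; last first.
    by rewrite vc0 // scaler0 !if_same.
  by rewrite stab_lact //; case: (f1 == f); rewrite ?vcM.
- exists [:: f]; split=> // [g x|]; first by rewrite inE rhoVfE => /negbTE->; rewrite andbF.
  by rewrite big_seq1 sum_epsH rhoVfE group1 eqxx vc1.
Qed.

Lemma embzE z v h x :
  embz lact tau f vc z v h x =
  if (x == lact z^-1%g f) && ((h * z^-1)%g \in S)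
  then tau h z^-1%g f *: vc (h * z^-1)%g v else 0.
Proof.
rewrite /embz (eq_bigr (fun g => if g == (h * z^-1)%g then
  if x == lact z^-1%g f then tau h z^-1%g f *: vc g v else 0 else 0)).
  by rewrite big_if_eq; case: (_ \in S); rewrite ?andbT ?andbF.
move=> g _; have -> : (h == g * z)%g = (g == h * z^-1)%g.
  by apply/eqP/eqP => ->; rewrite ?mulgK ?mulgKV.
have [->|_] /= := eqVneq g (h * z^-1)%g; last by rewrite scaler0.
by rewrite mulgKV; case: (x == _); rewrite ?scaler0.
Qed.

Lemma VtildeP (X : G -> F -> V) : Vtilde lact tau f vc X <->
  [/\ finsupp X,
      forall h x, x != lact h^-1%g f -> X h x = 0 &
      forall g h, g \in S -> vc g (X h (lact h^-1%g f))
                             = tau g h (lact h^-1%g f) *: X (g * h)%g (lact h^-1%g f)].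
Proof.
rewrite /Vtilde /cotensorH; split=> [[sX cotX] | [sX X0 Xc]].
  have X0 h x : x != lact h^-1%g f -> X h x = 0.
    move=> x'h; have := cotX 1%g f h x.
    rewrite rhoVfE group1 eqxx vc1 /proj1f group1 /DeltaH mul1g tau1g scale1r.
    by rewrite eq_sym lact_eq_lactV (negbTE x'h).
  split=> // g h Sg; have := cotX g f h (lact h^-1%g f).
  by rewrite rhoVfE Sg eqxx /proj1f Sg /DeltaH -lactM mulgV lact1 eqxx.
split=> // h1 f1 h2 f2; rewrite rhoVfE /proj1f /DeltaH.
case: (boolP (h1 \in S)) => //= Sh1.
have [f2E|f2'] := eqVneq f2 (lact h2^-1%g f).
  by rewrite f2E -lactM mulgV lact1; case: (f1 == f); rewrite ?Xc.
by rewrite X0 // vc0 // X0 ?lactV_stabM // scaler0 !if_same.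
Qed.

Lemma Vtilde0 : Vtilde lact tau f vc (fun _ _ => 0).
Proof.
by apply/VtildeP; split=> // [|g h Sg]; [exists [::] | rewrite vc0 ?scaler0].
Qed.

Lemma VtildeZD a X Y : Vtilde lact tau f vc X -> Vtilde lact tau f vc Y ->
  Vtilde lact tau f vc (fun g x => a *: X g x + Y g x).
Proof.
move=> /VtildeP[[sX X0] Xsupp Xc] /VtildeP[[sY Y0] Ysupp Yc]; apply/VtildeP; split.
- exists (sX ++ sY) => g x; rewrite mem_cat negb_or => /andP[sX'x sY'x].
  by rewrite X0 // Y0 // scaler0 addr0.
- by move=> h x x'h; rewrite Xsupp // Ysupp // scaler0 addr0.
- by move=> g h Sg; rewrite vcZD // Xc // Yc // scalerDr !scalerA mulrC.
Qed.

Lemma Vtilde_DeltaH X : Vtilde lact tau f vc X -> forall h2 f2,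
  Vtilde lact tau f vc (fun h1 f1 => DeltaH lact tau X h1 f1 h2 f2).
Proof.
move=> /VtildeP[_ Xsupp Xc] h2 f2; apply/VtildeP; split.
- by exists [:: lact h2 f2] => g x; rewrite inE /DeltaH => /negbTE->.
- move=> h x x'h; rewrite /DeltaH; case: eqP => // xE; rewrite Xsupp ?scaler0 //.
  by rewrite invMg lactM -lact_eq_lactV -xE.
- move=> g h Sg; rewrite /DeltaH eq_sym lact_eq_lactV -lactM -invMg.
  case: eqP => [f2E|_]; last by rewrite vc0 ?scaler0.
  have -> : lact h^-1%g f = lact h2 f2 by rewrite f2E -lactM invMg mulKVg.
  rewrite vcZ // [in X _ f2]f2E Xc // -f2E !scalerA mulgA.
  by rewrite tau_cocycle mulrC.
Qed.

Lemma Vtilde_comodule :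
  is_right_comod_H_sub lact tau (Vtilde lact tau f vc) (DeltaH lact tau (M := V)).
Proof.
split.
- by split; [exact: Vtilde0 | exact: VtildeZD].
- by move=> a X Y h1 f1 h2 f2 _ _; apply: DeltaH_linear.
- move=> X WX; split; last exact: Vtilde_DeltaH.
  by apply: DeltaH_finsupp; case/VtildeP: WX.
- by move=> X _ a1 b1 a2 b2 a3 b3; apply: DeltaH_coassoc.
- by move=> X /VtildeP[+ _ _]; apply: DeltaH_counit.
Qed.

Lemma embz_Vtilde z v : Vtilde lact tau f vc (embz lact tau f vc z v).
Proof.
apply/VtildeP; split.
- by exists [:: lact z^-1%g f] => h x; rewrite inE embzE => /negbTE->.
- move=> h x x'h; rewrite embzE; case: eqP => //= xE; case: ifP => // Shz.
  by move: x'h; have := lactV_stabM z Shz; rewrite mulgKV xE => ->; rewrite eqxx.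
move=> g h Sg; rewrite !embzE -mulgA (groupMl _ Sg).
case: (boolP ((h * z^-1)%g \in S)) => [Shz|_]; last by rewrite !andbF vc0 ?scaler0.
have := lactV_stabM z Shz; rewrite mulgKV => ->; rewrite eqxx /=.
by rewrite vcZ // vcM // !scalerA tau_cocycle mulrC.
Qed.

Lemma embz_linear z a v w h x :
  embz lact tau f vc z (a *: v + w) h x
  = a *: embz lact tau f vc z v h x + embz lact tau f vc z w h x.
Proof.
rewrite !embzE; case: ifP => [/andP[_ Shz]|_]; last by rewrite scaler0 addr0.
by rewrite vcZD // scalerDr !scalerA mulrC.
Qed.

Lemma embz_inj z v w :
  (forall h x, embz lact tau f vc z v h x = embz lact tau f vc z w h x) -> v = w.
Proof.
move=> /(_ z (lact z^-1%g f)); rewrite !embzE eqxx mulgV group1 /= !vc1.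
exact/scalerI/tau_neq0.
Qed.

Lemma DeltaH_embz_factor z v g y h1 f1 h2 f2 :
  g \in S -> (h2 * z^-1 = y^-1 * g^-1)%g ->
  DeltaH lact tau (embz lact tau f vc z v) h1 f1 h2 f2
  = ((tau y^-1%g g^-1%g f)^-1 * tau h2 z^-1%g f) *:
    (if f2 == lact z^-1%g f then embz lact tau f vc y (vc g^-1%g v) h1 f1 else 0).
Proof.
move=> Sg h2E; rewrite /DeltaH !embzE.
have [->|f2'] := eqVneq f2 (lact z^-1%g f); last by rewrite /= scaler0 !if_same scaler0.
have -> : lact h2 (lact z^-1%g f) = lact y^-1%g f.
  by rewrite -lactM h2E lactM stab_lact ?groupV.
have -> : (h1 * h2 * z^-1 = h1 * y^-1 * g^-1)%g by rewrite -mulgA h2E mulgA.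
rewrite /= groupMr ?groupV //; case: (f1 == _) => /=; last by rewrite scaler0.
case: ifP => Shy; last by rewrite !scaler0.
rewrite vcM ?groupV // !scalerA; congr (_ *: _).
have := tau_cocycle h1 y^-1%g g^-1%g f; rewrite stab_lact ?groupV // -h2E => cocycle_y.
by rewrite tau_cocycle cocycle_y; field; apply: tau_neq0.
Qed.

Section Decomposition.
Variable T : {set G}.
Hypothesis hT : right_transversal lact f T.

Lemma sum_embz (w : G -> V) h x :
  \sum_(z in T) embz lact tau f vc z (w z) h x
  = embz lact tau f vc (zpart lact f T h) (w (zpart lact f T h)) h x.
Proof.
have [Tzh _] := zpartP hT h.
rewrite (bigD1 (zpart lact f T h)) //= big1 ?addr0 // => z /andP[Tz z'zh].
rewrite embzE; case: ifP => // /andP[_ Shz].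
by move: z'zh; rewrite (zpart_eq hT Tz Shz) eqxx.
Qed.

Lemma Vtilde_decomposition X : Vtilde lact tau f vc X ->
  exists w : G -> V, forall h x, X h x = \sum_(z in T) embz lact tau f vc z (w z) h x.
Proof.
move=> /VtildeP[_ Xsupp Xc].
exists (fun z => (tau z z^-1%g f)^-1 *: X z (lact z^-1%g f)) => h x.
have [_ Sgh] := zpartP hT h; rewrite sum_embz embzE.
move: Sgh; rewrite /gpart; set z := zpart lact f T h => Shz.
have := lactV_stabM z Shz; rewrite mulgKV Shz andbT => hE.
have [->|x'z] := eqVneq x (lact z^-1%g f); last by rewrite Xsupp ?hE.
rewrite vcZ // Xc // mulgKV !scalerA -{1}[X h _]scale1r; congr (_ *: _).
have := tau_cocycleV (h * z^-1)%g z f; rewrite mulgKV => <-.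
by field; rewrite !tau_neq0.
Qed.

Lemma Vtilde_decomposition_uniq (w w' : G -> V) :
  (forall h x, \sum_(z in T) embz lact tau f vc z (w z) h x
               = \sum_(z in T) embz lact tau f vc z (w' z) h x) ->
  forall z, z \in T -> w z = w' z.
Proof.
move=> Eww' z Tz; move: (Eww' z (lact z^-1%g f)); rewrite !sum_embz.
rewrite (zpart_eq hT Tz) ?mulgV // !embzE eqxx mulgV group1 /= !vc1.
exact/scalerI/tau_neq0.
Qed.

Lemma DeltaH_embz z v : z \in T -> forall h1 f1 h2 f2,
  DeltaH lact tau (embz lact tau f vc z v) h1 f1 h2 f2
  = \sum_(x : G) ((tau (zpart lact f T x)^-1%g (gpart lact f T x)^-1%g f)^-1
                * tau ((zpart lact f T x)^-1 * (gpart lact f T x)^-1 * z)%g z^-1%g f) *: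
     (if (h2 == x^-1 * z)%g && (f2 == lact z^-1%g f)
      then embz lact tau f vc (zpart lact f T x) (vc (gpart lact f T x)^-1%g v) h1 f1
      else 0).
Proof.
move=> Tz h1 f1 h2 f2; rewrite (bigD1 (z * h2^-1)%g) //= big1 ?addr0 => [|x x'zh].
  set x0 := (z * h2^-1)%g; have [_ Sgx] := zpartP hT x0.
  have x0E : ((zpart lact f T x0)^-1 * (gpart lact f T x0)^-1 = h2 * z^-1)%g.
    by rewrite -invMg /gpart mulgKV invMg invgK.
  have -> : (x0^-1 * z = h2)%g by rewrite invMg invgK mulgKV.
  rewrite x0E mulgKV eqxx /=.
  exact: DeltaH_embz_factor (esym x0E).
rewrite (_ : (h2 == x^-1 * z)%g = false) ?scaler0 //.
by apply: contraNF x'zh => /eqP->; rewrite invMg invgK mulKVg.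
Qed.

End Decomposition.
End Comodule.
End SmashCoalgebra.

Theorem lemma4p2
  (k : closedFieldType) (hchar : [pchar k] =i pred0)
  (F : groupType) (G : finGroupType)
  (lact : G -> F -> F) (ract : G -> F -> G)
  (sigma : G -> F -> F -> k) (tau : G -> G -> F -> k)
  (hmp : matched_pair lact ract)
  (hst : sigma_tau_conditions lact ract sigma tau)
  (f : F) (T : {set G}) (hT : right_transversal lact f T) :
  (* (1) p_g |-> p_g # f : k^{G_f}_{tau_f} -> H'_f *)
  [/\ (* span{p_g#f | g in G_f} is a subcoalgebra of H'_f *)
      (forall X : G -> F -> k^o, in_Sf lact f X ->
         forall h1 f1 h2 f2,
           ~~ [&& h1 \in stab lact f, f1 == f, h2 \in stab lact f & f2 == f] ->
           DeltaHp lact tau f X h1 f1 h2 f2 = 0),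
      (* the map is a coalgebra morphism *)
      (forall g, g \in stab lact f ->
         (forall h1 f1 h2 f2,
            DeltaHp lact tau (M := k^o) f (phi lact f (basisC k g)) h1 f1 h2 f2
            = phi2 lact f (DeltaC lact tau f g) h1 f1 h2 f2) /\
         counit_is (M := k^o) (phi lact f (basisC k g)) (epsC k g)),
      (* it is linear, injective on k^{G_f}, with image span{p_g#f | g in G_f} *)
      (forall (a : k) (c c' : G -> k) h x,
         phi lact f (fun g => a * c g + c' g) h x
         = a * phi lact f c h x + phi lact f c' h x),
      (forall c c' : G -> k, (forall h x, phi lact f c h x = phi lact f c' h x) ->
         forall g, g \in stab lact f -> c g = c' g) &
      (forall X : G -> F -> k, in_Sf lact f X <->
         exists c : G -> k, forall h x, X h x = phi lact f c h x)]
  /\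
  forall (V : lmodType k) (vc : G -> V -> V),
    is_right_comod_C lact tau f vc ->
    (* (2) V (x) kf is a right H'_f-comodule via rho' *)
    is_right_comod_Hp lact tau f (rhoVf lact f vc) /\
    (* (3) V~ = (V (x) kf) box_{H'_f} H is a right H-comodule via id (x) Delta *)
    [/\ is_right_comod_H_sub lact tau (Vtilde lact tau f vc) (DeltaH lact tau (M := V)),
        (* v |-> v (x) f (x) z is linear, injective, with values in V~ *)
        (forall z, z \in T ->
           [/\ (forall v, Vtilde lact tau f vc (embz lact tau f vc z v)),
               (forall (a : k) v w h x,
                  embz lact tau f vc z (a *: v + w) h x
                  = a *: embz lact tau f vc z v h x + embz lact tau f vc z w h x) &
               (forall v w, (forall h x, embz lact tau f vc z v h x
                                         = embz lact tau f vc z w h x) -> v = w)]),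
        (* V~ = (+)_{z in T} V (x) kf (x) z *)
        (forall X, Vtilde lact tau f vc X ->
           exists w : G -> V, forall h x,
             X h x = \sum_(z in T) embz lact tau f vc z (w z) h x),
        (forall w w' : G -> V,
           (forall h x, \sum_(z in T) embz lact tau f vc z (w z) h x
                        = \sum_(z in T) embz lact tau f vc z (w' z) h x) ->
           forall z, z \in T -> w z = w' z) &
        (* the coaction formula *)
        (forall z v, z \in T -> forall h1 f1 h2 f2,
           DeltaH lact tau (embz lact tau f vc z v) h1 f1 h2 f2
           = \sum_(x : G)
               ((tau (zpart lact f T x)^-1%g (gpart lact f T x)^-1%g f)^-1
                * tau ((zpart lact f T x)^-1 * (gpart lact f T x)^-1 * z)%g
                      z^-1%g f) *:
               (if (h2 == x^-1 * z)%g && (f2 == lact z^-1%g f)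
                then embz lact tau f vc (zpart lact f T x)
                       (vc (gpart lact f T x)^-1%g v) h1 f1
                else 0))].
Proof.
split.
  split=> [X|g Sg|a c c' h x|c c'|X].
  - exact: DeltaHp_in_Sf.
  - exact: (conj (DeltaHp_phi_basisC tau hmp Sg) (counit_phi_basisC k hmp f g)).
  - exact: phi_linear.
  - exact: phi_inj.
  - exact: in_Sf_phi.
move=> V vc hc; split; first exact: (rhoVf_comodule hmp hc).
split.
- exact: (Vtilde_comodule hmp hst hc).
- move=> z Tz; split=> [v|a v w h x|v w]; first exact: (embz_Vtilde hmp hst hc).
    exact: (embz_linear hc).
  exact: (embz_inj hmp hst hc).
- exact: (Vtilde_decomposition hmp hst hc hT).
- exact: (Vtilde_decomposition_uniq hmp hst hc hT).
- exact: (DeltaH_embz hmp hst hc hT).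
Qed.
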